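(* Let $\mathcal{X}$ be a finite set, let $p_1,\ldots,p_t$ and $q_1,\ldots,q_l$ be probability distributions on $\mathcal{X}$, and let $0\le \epsilon_{ij}\le 1$ for $i\in[t]$, $j\in[l]$. Then there is a function $f:\mathcal{X}\to[0,1]$ such that (1) for all $i\in[t]$, $\sum_x p_i(x) f(x)\ \ge\ 1-\sum_{j=1}^l \epsilon_{ij}$; (2) for all $j\in[l]$, $\sum_x q_j(x) f(x)\ \le\ \sum_{i=1}^t 2^{-D^{\epsilon_{ij}}_H(p_i\|q_j)}$.
   Context: For probability distributions $p,q$ on a finite set $\Omega$ and $0\le\epsilon\le 1$, the classical hypothesis testing relative entropy is $D^\epsilon_H(p\|q):=\max_{f}\,-\log_2\sum_\omega f(\omega)q(\omega)$, where the maximum is over all functions $f:\Omega\to[0,1]$ with $\sum_\omega f(\omega)p(\omega)\ge 1-\epsilon$. *)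

From Stdlib Require Import Reals Lra ClassicalEpsilon.
Open Scope R_scope.

(* The finite set X is modelled as {0, ..., n-1}; functions on X are
   functions nat -> R of which only the values at x < n matter. *)

Fixpoint sumR (n : nat) (g : nat -> R) : R :=
  match n with
  | O => 0
  | S k => sumR k g + g k
  end.

Definition is_distr (n : nat) (p : nat -> R) : Prop :=
  (forall x, (x < n)%nat -> 0 <= p x) /\ sumR n p = 1.

Definition is_test (n : nat) (f : nat -> R) : Prop :=
  forall x, (x < n)%nat -> 0 <= f x <= 1.

Definition expect (n : nat) (p f : nat -> R) : R :=
  sumR n (fun x => f x * p x).

(* greatest lower bound of a set of reals (0 if it does not exist) *)
Definition Rglb (E : R -> Prop) : R :=
  - epsilon (inhabits 0) (fun m => is_lub (fun y => E (- y)) m).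

(* By definition D^eps_H(p||q) = - log2 (beta_H eps p q), i.e.
   2^{- D^eps_H(p||q)} = beta_H eps p q  (with D_H = +infinity and
   2^{-D_H} = 0 when the minimum is 0).  For distributions p,q and
   0 <= eps <= 1 the feasible set is nonempty (f = 1) and compact, so
   the infimum below is the attained minimum. *)
Definition beta_H (n : nat) (eps : R) (p q : nat -> R) : R :=
  Rglb (fun y => exists f, is_test n f /\ expect n p f >= 1 - eps
                           /\ y = expect n q f).

Definition pow2_neg_DH (n : nat) (eps : R) (p q : nat -> R) : R :=
  beta_H n eps p q.

(* For each pair (i, j) take an optimal test f_ij for p_i against q_j at
   level eps_ij: it accepts p_i with probability at least 1 - eps_ij and
   q_j with probability exactly 2^{-D_H}.  The test
   f = max_i min_j f_ij then works.  Pointwise, min_j f_ij >= 1 - sum_j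
   (1 - f_ij), so a union bound gives (1); and max_i min_j f_ij <= sum_i f_ij
   for every fixed j, which gives (2).  Optimal tests exist because a linear
   function attains its minimum on the compact set of feasible tests. *)

From Stdlib Require Import Reals Lra Lia ClassicalEpsilon.
From HB Require structures.
From mathcomp Require all_boot all_order all_algebra.
From mathcomp Require all_classical all_reals all_analysis.
From mathcomp Require Rstruct Rstruct_topology.
Open Scope R_scope.

Module OptimalTest.
Import structures all_boot all_order all_algebra.
Import all_classical all_reals all_analysis Rstruct Rstruct_topology.
Import Order.TTheory GRing.Theory Num.Theory.
Import numFieldNormedType.Exports.
Local Open Scope classical_set_scope.
Local Open Scope ring_scope.

Lemma linear_min_attained_on_box (R : realType) n (c : R) (p q : 'I_n -> R)
    (v0 : 'rV[R]_n) :
  (forall i, 0 <= v0 ord0 i <= 1) -> c <= \sum_i v0 ord0 i * p i ->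
  exists2 v : 'rV[R]_n,
    (forall i, 0 <= v ord0 i <= 1) /\ c <= \sum_i v ord0 i * p i &
    forall w : 'rV[R]_n, (forall i, 0 <= w ord0 i <= 1) ->
      c <= \sum_i w ord0 i * p i ->
      \sum_i v ord0 i * q i <= \sum_i w ord0 i * q i.
Proof.
move=> v0_box v0_c.
pose box := [set v : 'rV[R]_n | forall i, `[0, 1]%classic (v ord0 i)].
pose feasible := [set v : 'rV[R]_n | c <= \sum_i v ord0 i * p i].
have linear_cont (r : 'I_n -> R) :
    continuous (fun v : 'rV[R]_n => \sum_i v ord0 i * r i).
  apply: continuous_big; first exact: add_continuous.
  move=> i _ v; apply: (@continuousM _ _ (fun v : 'rV[R]_n => v ord0 i) (fun=> r i)).
  - exact: coord_continuous.
  - exact: cst_continuous.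
have box_compact : compact box.
  exact: (@rV_compact R n (fun=> `[0, 1]%classic) (fun=> @segment_compact R 0 1)).
have feasible_closed : closed feasible.
  exact: (proj1 (continuous_closedP _) (linear_cont p)) _ (@closed_ge R c).
have nonempty : (box `&` feasible) !=set0.
  by exists v0; split => //= i; rewrite /= in_itv /=; exact: v0_box.
have [v] := compact_EVT_min nonempty
  (compact_closedI box_compact feasible_closed)
  (continuous_subspaceT (linear_cont q)).
rewrite inE => -[v_box v_c] v_min.
exists v => [|w w_box w_c]; last by apply: v_min; rewrite inE; split.
by split => // i; have := v_box i; rewrite /= in_itv.
Qed.

Lemma sumR_big n (g : nat -> R) : sumR n g = \sum_(i < n) g i.
Proof.
elim: n => [|n IH]; first by rewrite big_ord0.
by rewrite big_ord_recr /= IH.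
Qed.

Lemma expect_rowE n (p : nat -> R) (g : nat -> R) :
  expect n p g = \sum_(i < n) (\row_(k < n) g k) ord0 i * p i.
Proof. by rewrite /expect sumR_big; apply: eq_bigr => i _; rewrite mxE. Qed.

Lemma is_test_row {n} {g : nat -> R} :
  is_test n g -> forall i, 0 <= (\row_(k < n) g k) ord0 i <= 1.
Proof.
move=> g_test i; rewrite mxE.
have [g0 g1] := g_test i (ssrnat.ltP (ltn_ord i)).
by apply/andP; split; apply/RleP.
Qed.

Lemma optimal_test_exists n (c : R) (p q g0 : nat -> R) :
  is_test n g0 -> Rge (expect n p g0) c ->
  exists f, is_test n f /\ Rge (expect n p f) c /\
    forall g, is_test n g -> Rge (expect n p g) c ->
      Rle (expect n q f) (expect n q g).
Proof.
move=> g0_test g0_c.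
have g0_row_c : c <= \sum_i (\row_(k < n) g0 k) ord0 i * p i.
  by rewrite -expect_rowE; apply/RleP/Rge_le.
have [v [v_box v_c] v_min] := @linear_min_attained_on_box R n c _
  (fun i => q i) _ (is_test_row g0_test) g0_row_c.
pose f x := if insub x is Some i then v ord0 i else 0.
have row_f : \row_(k < n) f k = v.
  by apply/rowP => i; rewrite mxE /f valK.
exists f; split; [|split].
- move=> x /ssrnat.ltP x_lt; have := v_box (Ordinal x_lt).
  by rewrite -row_f mxE => /andP[f0 f1]; split; apply/RleP.
- by rewrite expect_rowE row_f; apply/Rle_ge/RleP.
- move=> g g_test g_c; rewrite !expect_rowE row_f; apply/RleP.
  apply: v_min; first exact: is_test_row.
  by rewrite -expect_rowE; apply/RleP/Rge_le.
Qed.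
End OptimalTest.

Lemma sumR_ext n f g :
  (forall x, (x < n)%nat -> f x = g x) -> sumR n f = sumR n g.
Proof.
induction n as [|n IH]; intros H; simpl; [reflexivity|].
rewrite IH, H; [reflexivity | lia | intros; apply H; lia].
Qed.

Lemma sumR_le n f g :
  (forall x, (x < n)%nat -> f x <= g x) -> sumR n f <= sumR n g.
Proof.
induction n as [|n IH]; intros H; simpl; [lra|].
assert (sumR n f <= sumR n g) by (apply IH; intros; apply H; lia).
assert (f n <= g n) by (apply H; lia).
lra.
Qed.

Lemma sumR_nonneg n f : (forall x, (x < n)%nat -> 0 <= f x) -> 0 <= sumR n f.
Proof.
intros H; replace 0 with (sumR n (fun _ => 0)).
- now apply sumR_le.
- induction n; simpl; [reflexivity | rewrite IHn by (intros; apply H; lia); ring].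
Qed.

Lemma sumR_add n f g : sumR n (fun x => f x + g x) = sumR n f + sumR n g.
Proof. induction n; simpl; [lra|]. rewrite IHn. ring. Qed.

Lemma sumR_sub n f g : sumR n (fun x => f x - g x) = sumR n f - sumR n g.
Proof. induction n; simpl; [lra|]. rewrite IHn. ring. Qed.

Lemma sumR_mulr n f c : sumR n (fun x => f x * c) = sumR n f * c.
Proof. induction n; simpl; [lra|]. rewrite IHn. ring. Qed.

Lemma sumR_swap n l (h : nat -> nat -> R) :
  sumR n (fun x => sumR l (fun j => h x j)) =
  sumR l (fun j => sumR n (fun x => h x j)).
Proof.
induction n as [|n IH]; simpl.
- induction l as [|l IHl]; simpl; [reflexivity|]. rewrite <- IHl. ring.
- rewrite IH, <- sumR_add. reflexivity.
Qed.

Lemma expect_le n p f g :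
  (forall x, (x < n)%nat -> 0 <= p x) ->
  (forall x, (x < n)%nat -> f x <= g x) -> expect n p f <= expect n p g.
Proof.
intros p_ge0 fg; apply sumR_le; intros x Hx.
apply Rmult_le_compat_r; auto.
Qed.

Lemma expect_sumR n l p (F : nat -> nat -> R) :
  expect n p (fun x => sumR l (fun j => F j x)) =
  sumR l (fun j => expect n p (F j)).
Proof.
unfold expect; rewrite <- sumR_swap.
apply sumR_ext; intros x _; symmetry; apply sumR_mulr.
Qed.

Lemma expect_one_sub n p f :
  sumR n p = 1 -> expect n p (fun x => 1 - f x) = 1 - expect n p f.
Proof.
intros p_sum; unfold expect.
rewrite (sumR_ext n _ (fun x => p x - f x * p x)) by (intros; ring).
now rewrite sumR_sub, p_sum.
Qed.

Lemma expect_one n p : sumR n p = 1 -> expect n p (fun _ => 1) = 1.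
Proof.
intros p_sum; unfold expect.
now rewrite (sumR_ext n _ p) by (intros; ring).
Qed.

Lemma expect_one_sub_sumR n l p (F : nat -> nat -> R) :
  sumR n p = 1 ->
  expect n p (fun x => 1 - sumR l (fun j => 1 - F j x)) =
  1 - sumR l (fun j => 1 - expect n p (F j)).
Proof.
intros p_sum; rewrite expect_one_sub, expect_sumR by exact p_sum.
f_equal; apply sumR_ext; intros j _; now apply expect_one_sub.
Qed.

(* Minimum and maximum of g 0, ..., g (l-1), taken inside [0, 1]: the empty
   minimum is 1 and the empty maximum is 0. *)
Fixpoint minR (l : nat) (g : nat -> R) : R :=
  match l with O => 1 | S k => Rmin (minR k g) (g k) end.

Fixpoint maxR (l : nat) (g : nat -> R) : R :=
  match l with O => 0 | S k => Rmax (maxR k g) (g k) end.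

Lemma minR_bounds l g :
  (forall k, (k < l)%nat -> 0 <= g k <= 1) -> 0 <= minR l g <= 1.
Proof.
induction l as [|l IH]; intros H; simpl; [lra|].
assert (0 <= minR l g <= 1) by (apply IH; intros; apply H; lia).
assert (0 <= g l <= 1) by (apply H; lia).
unfold Rmin; destruct Rle_dec; lra.
Qed.

Lemma maxR_bounds l g :
  (forall k, (k < l)%nat -> 0 <= g k <= 1) -> 0 <= maxR l g <= 1.
Proof.
induction l as [|l IH]; intros H; simpl; [lra|].
assert (0 <= maxR l g <= 1) by (apply IH; intros; apply H; lia).
assert (0 <= g l <= 1) by (apply H; lia).
unfold Rmax; destruct Rle_dec; lra.
Qed.

Lemma minR_le l g k : (k < l)%nat -> minR l g <= g k.
Proof.
induction l as [|l IH]; intros H; simpl; [lia|].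
destruct (Nat.eq_dec k l) as [->|Hne]; [apply Rmin_r|].
apply Rle_trans with (minR l g); [apply Rmin_l | apply IH; lia].
Qed.

Lemma maxR_ge l g k : (k < l)%nat -> g k <= maxR l g.
Proof.
induction l as [|l IH]; intros H; simpl; [lia|].
destruct (Nat.eq_dec k l) as [->|Hne]; [apply Rmax_r|].
apply Rle_trans with (maxR l g); [apply IH; lia | apply Rmax_l].
Qed.

Lemma one_sub_sumR_le_minR l g :
  (forall k, (k < l)%nat -> g k <= 1) ->
  1 - sumR l (fun k => 1 - g k) <= minR l g.
Proof.
induction l as [|l IH]; intros H; simpl; [lra|].
assert (1 - sumR l (fun k => 1 - g k) <= minR l g) by (apply IH; intros; apply H; lia).
assert (g l <= 1) by (apply H; lia).
assert (0 <= sumR l (fun k => 1 - g k)).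
{ apply sumR_nonneg; intros x Hx; assert (g x <= 1) by (apply H; lia); lra. }
apply Rmin_glb; lra.
Qed.

Lemma maxR_le_sumR l g :
  (forall k, (k < l)%nat -> 0 <= g k) -> maxR l g <= sumR l g.
Proof.
induction l as [|l IH]; intros H; simpl; [lra|].
assert (maxR l g <= sumR l g) by (apply IH; intros; apply H; lia).
assert (0 <= g l) by (apply H; lia).
assert (0 <= sumR l g) by (apply sumR_nonneg; intros; apply H; lia).
apply Rmax_lub; lra.
Qed.

Lemma Rglb_min (E : R -> Prop) m :
  E m -> (forall y, E y -> m <= y) -> Rglb E = m.
Proof.
intros Em m_low.
assert (lub : is_lub (fun y => E (- y)) (- m)).
{ split.
  - intros y Ey; specialize (m_low _ Ey); lra.
  - intros b Hb; apply Hb; now rewrite Ropp_involutive. }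
change (- epsilon (inhabits 0) (is_lub (fun y => E (- y))) = m).
pose proof (epsilon_spec (inhabits 0) (is_lub (fun y => E (- y))) (ex_intro _ _ lub))
  as spec.
rewrite (is_lub_u _ _ _ spec lub); ring.
Qed.

Lemma beta_H_attained n eps p q :
  is_distr n p -> 0 <= eps ->
  exists f, is_test n f /\ expect n p f >= 1 - eps /\
            expect n q f = beta_H n eps p q.
Proof.
intros [_ p_sum] eps_ge0.
destruct (OptimalTest.optimal_test_exists n (1 - eps) p q (fun _ => 1))
  as [f [f_test [f_p f_min]]].
- intros x _; lra.
- rewrite expect_one by exact p_sum; lra.
- exists f; split; [exact f_test | split; [exact f_p|]].
  symmetry; apply Rglb_min; [now exists f|].
  intros y [g [g_test [g_p ->]]]; now apply f_min.
Qed.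

Definition maxmin (t l : nat) (F : nat -> nat -> nat -> R) (x : nat) : R :=
  maxR t (fun i => minR l (fun j => F i j x)).

Section MaxMinTest.
Variables (n t l : nat) (F : nat -> nat -> nat -> R).
Hypothesis F_test : forall i j, (i < t)%nat -> (j < l)%nat -> is_test n (F i j).

Let minR_F_bounds i x : (i < t)%nat -> (x < n)%nat ->
  0 <= minR l (fun j => F i j x) <= 1.
Proof. intros hi hx; apply minR_bounds; intros j hj; now apply F_test. Qed.

Lemma maxmin_test : is_test n (maxmin t l F).
Proof. intros x hx; apply maxR_bounds; intros; now apply minR_F_bounds. Qed.

Lemma expect_maxmin_ge i p : (i < t)%nat -> is_distr n p ->
  1 - sumR l (fun j => 1 - expect n p (F i j)) <= expect n p (maxmin t l F).
Proof.
intros hi [p_ge0 p_sum]; rewrite <- (expect_one_sub_sumR n l p (F i)) by exact p_sum.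
apply expect_le; [exact p_ge0|]; intros x hx.
apply Rle_trans with (minR l (fun j => F i j x)).
- apply one_sub_sumR_le_minR; intros j hj; now apply F_test.
- now apply (maxR_ge t (fun i => minR l (fun j => F i j x))).
Qed.

Lemma expect_maxmin_le j q : (j < l)%nat -> (forall x, (x < n)%nat -> 0 <= q x) ->
  expect n q (maxmin t l F) <= sumR t (fun i => expect n q (F i j)).
Proof.
intros hj q_ge0; rewrite <- (expect_sumR n t q (fun i => F i j)).
apply expect_le; [exact q_ge0|]; intros x hx.
apply Rle_trans with (sumR t (fun i => minR l (fun j => F i j x))).
- apply maxR_le_sumR; intros; now apply minR_F_bounds.
- apply sumR_le; intros i hi; now apply (minR_le l (fun j => F i j x)).
Qed.
End MaxMinTest.

Lemma choice2 {A : Type} (P : nat -> nat -> A -> Prop) :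
  (forall i j, exists a, P i j a) -> exists F, forall i j, P i j (F i j).
Proof.
intros HP; destruct (choice (fun ij a => P (fst ij) (snd ij) a)) as [G HG].
- intros [i j]; apply HP.
- exists (fun i j => G (i, j)); intros i j; apply (HG (i, j)).
Qed.

Theorem fact1 (n t l : nat) (p q : nat -> nat -> R) (eps : nat -> nat -> R)
  (hp : forall i, (i < t)%nat -> is_distr n (p i))
  (hq : forall j, (j < l)%nat -> is_distr n (q j))
  (heps : forall i j, (i < t)%nat -> (j < l)%nat -> 0 <= eps i j <= 1) :
  exists f : nat -> R, is_test n f /\
    (forall i, (i < t)%nat ->
       expect n (p i) f >= 1 - sumR l (fun j => eps i j)) /\
    (forall j, (j < l)%nat ->
       expect n (q j) f <= sumR t (fun i => pow2_neg_DH n (eps i j) (p i) (q j))).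
Proof.
destruct (choice2 (fun i j f => (i < t)%nat -> (j < l)%nat ->
    is_test n f /\ expect n (p i) f >= 1 - eps i j /\
    expect n (q j) f = pow2_neg_DH n (eps i j) (p i) (q j))) as [F HF].
{ intros i j.
  destruct (Compare_dec.lt_dec i t) as [hi|]; [|now exists (fun _ => 0)].
  destruct (Compare_dec.lt_dec j l) as [hj|]; [|now exists (fun _ => 0)].
  destruct (beta_H_attained n (eps i j) (p i) (q j)) as [f Hf];
    [apply hp, hi | apply heps; assumption | now exists f]. }
assert (F_test : forall i j, (i < t)%nat -> (j < l)%nat -> is_test n (F i j))
  by (intros i j hi hj; now apply HF).
exists (maxmin t l F); split; [|split].
- exact (maxmin_test n t l F F_test).
- intros i hi; apply Rle_ge.
  eapply Rle_trans; [|exact (expect_maxmin_ge n t l F F_test i (p i) hi (hp i hi))].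
  enough (sumR l (fun j => 1 - expect n (p i) (F i j)) <= sumR l (fun j => eps i j))
    by lra.
  apply sumR_le; intros j hj; destruct (HF i j hi hj) as [_ [Hp _]]; lra.
- intros j hj.
  eapply Rle_trans; [exact (expect_maxmin_le n t l F F_test j (q j) hj (proj1 (hq j hj)))|].
  apply sumR_le; intros i hi; destruct (HF i j hi hj) as [_ [_ Hq]]; lra.
Qed.
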